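(* Let $\mathcal H$ be a complex Hilbert space (of any dimension) and let $A_1,\ldots,A_n,B$ be closed subspaces of $\mathcal H$ ($n\ge 0$). Then $A_1\mathbin{\&}\cdots\mathbin{\&}A_n\le B$ if and only if $[A_n]\cdots[A_1]\mathcal H\subseteq B$.
   Context: In the orthomodular lattice of closed subspaces of $\mathcal H$ (order $\subseteq$, $\neg A=A^\perp$, $\vee$ closed span, $\wedge$ intersection), $A\mathbin{\&}B=(A\vee B^\perp)\wedge B$; $\&$ associates to the left and the empty $\&$-product ($n=0$) is $\mathcal H$. $[A]$ denotes the orthogonal projection onto $A$; for $n=0$ the product $[A_n]\cdots[A_1]$ is the identity. *)

From HB Require Import structures.
From mathcomp Require Import all_boot all_order all_algebra.
From mathcomp Require Import boolp classical_sets reals.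
From mathcomp Require Import complex.
From Stdlib Require Import ClassicalEpsilon.
Set Implicit Arguments. Unset Strict Implicit. Unset Printing Implicit Defensive.
Import Order.TTheory GRing.Theory Num.Theory.
Local Open Scope ring_scope.
Local Open Scope classical_set_scope.

Record hilbert (R : realType) (V : lmodType R[i]) := Hilbert {
  inner : V -> V -> R[i];
  innerD : forall x y z, inner (x + y) z = inner x z + inner y z;
  innerZ : forall (a : R[i]) x y, inner (a *: x) y = a * inner x y;
  innerC : forall x y, inner y x = conjc (inner x y);
  inner_Im : forall x, complex.Im (inner x x) = 0;
  inner_ge0 : forall x, 0 <= complex.Re (inner x x);
  inner_eq0 : forall x, inner x x = 0 -> x = 0;
  inner_complete : forall u : nat -> V,
    (forall e : R, 0 < e -> exists N, forall m n, (N <= m)%N -> (N <= n)%N ->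
        Num.sqrt (complex.Re (inner (u m - u n) (u m - u n))) < e) ->
    exists l, forall e : R, 0 < e -> exists N, forall n, (N <= n)%N ->
        Num.sqrt (complex.Re (inner (u n - l) (u n - l))) < e
}.

Section HilbertDefs.
Variables (R : realType) (V : lmodType R[i]) (H : hilbert V).

Definition hnorm (x : V) : R := Num.sqrt (complex.Re (inner H x x)).

Definition hconv (u : nat -> V) (l : V) : Prop :=
  forall e : R, 0 < e -> exists N, forall n, (N <= n)%N -> hnorm (u n - l) < e.

Definition closed_subspace (A : set V) : Prop :=
  [/\ A 0,
      (forall x y, A x -> A y -> A (x + y)),
      (forall (a : R[i]) x, A x -> A (a *: x)) &
      (forall u l, (forall n, A (u n)) -> hconv u l -> A l)].

Definition ortho (A : set V) : set V :=
  [set x | forall y, A y -> inner H x y = 0].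

Definition cjoin (A B : set V) : set V :=
  [set x | forall C, closed_subspace C -> A `<=` C -> B `<=` C -> C x].

Definition cmeet (A B : set V) : set V := A `&` B.

(* Sasaki-type product  A & B = (A \/ B^perp) /\ B *)
Definition andthen (A B : set V) : set V := cmeet (cjoin A (ortho B)) B.

Definition andthen_seq (As : seq (set V)) : set V := foldl andthen setT As.

Definition is_proj (A : set V) (x y : V) : Prop :=
  A y /\ forall z, A z -> inner H (x - y) z = 0.

(* [A] : the orthogonal projection onto A (for closed subspaces A such a y
   exists uniquely by the projection theorem) *)
Definition proj (A : set V) (x : V) : V :=
  epsilon (inhabits (0 : V)) (is_proj A x).

(* [A_n] ... [A_1] x  (identity for n = 0) *)
Definition proj_seq (As : seq (set V)) (x : V) : V :=
  foldl (fun y A => proj A y) x As.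

End HilbertDefs.

From Pilot Require Import Defs.
From HB Require Import structures.
From mathcomp Require Import all_boot all_order all_algebra.
From mathcomp Require Import boolp classical_sets reals.
From mathcomp Require Import complex.
From mathcomp Require Import lra.
From Stdlib Require Import ClassicalEpsilon.
Set Implicit Arguments. Unset Strict Implicit. Unset Printing Implicit Defensive.
Import Order.TTheory GRing.Theory Num.Theory.
Local Open Scope ring_scope.
Local Open Scope classical_set_scope.
Local Open Scope complex_scope.

(* Write S for A_1 & ... & A_n. Everything rests on the one-step equivalence
   S & A <= B  <->  S <= [A]^-1(B)  for closed A and B.  If S & A <= B and s is in S,
   then [A]s = s - (s - [A]s) lies in S \/ A^perp (as s - [A]s is in A^perp) and in A.
   Conversely [A]^-1(B) is a closed subspace, since [A] is linear and contractive;
   it contains S and A^perp, hence S \/ A^perp, and it agrees with B on A.  The projection itself comes from the projection theorem: a minimizing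
   sequence for the distance to A is Cauchy by the parallelogram law, its limit is
   a nearest point, and nearest points are characterised by orthogonality. *)

Section Hilbert.
Variables (R : realType) (V : lmodType R[i]) (H : hilbert V).
Local Notation ip := (inner H).

Lemma inner0l y : ip 0 y = 0.
Proof.
have h := innerD H 0 0 y; rewrite addr0 in h.
by apply: (addrI (ip 0 y)); rewrite addr0 -h.
Qed.

Lemma innerNl x y : ip (- x) y = - ip x y.
Proof. by apply/eqP; rewrite -subr_eq0 opprK -innerD addNr inner0l. Qed.

Lemma innerBl x y z : ip (x - y) z = ip x z - ip y z.
Proof. by rewrite innerD innerNl. Qed.

Lemma innerDr x y z : ip x (y + z) = ip x y + ip x z.
Proof. by rewrite innerC innerD rmorphD /= -!innerC. Qed.

Lemma innerZr a x y : ip x (a *: y) = a^* * ip x y.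
Proof. by rewrite innerC innerZ rmorphM /= -innerC. Qed.

Lemma innerNr x y : ip x (- y) = - ip x y.
Proof. by rewrite innerC innerNl rmorphN /= -innerC. Qed.

Definition sqnorm (x : V) : R := complex.Re (ip x x).

Lemma sqnorm_ge0 x : 0 <= sqnorm x. Proof. exact: inner_ge0. Qed.

Lemma inner_self x : ip x x = (sqnorm x)%:C.
Proof. by rewrite /sqnorm; move: (inner_Im H x); case: (ip x x) => a b /= ->. Qed.

Lemma sqnormN x : sqnorm (- x) = sqnorm x.
Proof. by rewrite /sqnorm innerNl innerNr opprK. Qed.

Lemma sqnormD x y :
  sqnorm (x + y) = sqnorm x + sqnorm y + 2 * complex.Re (ip x y).
Proof.
rewrite /sqnorm innerD !innerDr !raddfD /= [ip y x]innerC.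
have -> : complex.Re (ip x y)^* = complex.Re (ip x y) by case: (ip x y).
lra.
Qed.

Lemma sqnormB x y :
  sqnorm (x - y) = sqnorm x + sqnorm y - 2 * complex.Re (ip x y).
Proof. by rewrite sqnormD sqnormN innerNr raddfN /=; lra. Qed.

Lemma Re_inner_scale (s : R) x y :
  complex.Re (ip (s%:C *: x) y) = s * complex.Re (ip x y).
Proof. by rewrite innerZ; case: (ip x y) => a b /=; rewrite mul0r subr0. Qed.

Lemma sqnormZ (s : R) x : sqnorm (s%:C *: x) = s ^+ 2 * sqnorm x.
Proof.
rewrite /sqnorm Re_inner_scale innerZr inner_self /=.
by rewrite mulr0 subr0 mulrA expr2.
Qed.

Lemma sqnormD_le x y (s : R) : 0 < s ->
  sqnorm (x + y) <= (1 + s) * sqnorm x + (1 + s^-1) * sqnorm y.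
Proof.
move=> s_gt0; rewrite sqnormD.
suff : 2 * complex.Re (ip x y) <= s * sqnorm x + s^-1 * sqnorm y by lra.
rewrite -(ler_pM2l s_gt0) mulrDr [s * (s^-1 * _)]mulrA mulfV ?gt_eqF // mul1r.
have := sqnorm_ge0 (s%:C *: x - y).
by rewrite sqnormB sqnormZ Re_inner_scale expr2; lra.
Qed.

Lemma hnorm_lt x (e : R) : 0 < e -> (hnorm H x < e) = (sqnorm x < e ^+ 2).
Proof.
move=> e_gt0; rewrite /hnorm -[e in LHS](gtr0_norm e_gt0) -sqrtr_sqr.
by rewrite ltr_sqrt ?exprn_gt0.
Qed.

Lemma hconv_sqnorm u l : hconv H u l <->
  forall d : R, 0 < d -> exists N, forall n, (N <= n)%N -> sqnorm (u n - l) < d.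
Proof.
split=> [cvg_ul d d_gt0 | small_ul e e_gt0].
- have sqrtd_gt0 : 0 < Num.sqrt d by rewrite sqrtr_gt0.
  have [N HN] := cvg_ul _ sqrtd_gt0.
  by exists N => n /HN; rewrite hnorm_lt // sqr_sqrtr ?ltW.
- have [N HN] := small_ul _ (exprn_gt0 2 e_gt0).
  by exists N => n /HN; rewrite -hnorm_lt.
Qed.

Lemma sqnorm_cauchy_cvg (u : nat -> V) :
  (forall d : R, 0 < d -> exists N, forall m n, (N <= m)%N -> (N <= n)%N ->
     sqnorm (u m - u n) < d) ->
  exists l, hconv H u l.
Proof.
move=> cauchy_u; apply: inner_complete => e e_gt0.
have [N HN] := cauchy_u _ (exprn_gt0 2 e_gt0).
by exists N => m n Nm Nn; rewrite -/(hnorm H _) hnorm_lt // HN.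
Qed.

Lemma invS_lt_eventually (e : R) : 0 < e ->
  exists N, forall n, (N <= n)%N -> n.+1%:R^-1 < e.
Proof.
move=> e_gt0; have inve_ge0 : 0 <= e^-1 by rewrite invr_ge0 ltW.
exists (Num.bound e^-1) => n Nn.
rewrite invf_plt ?posrE ?ltr0n //.
apply: lt_le_trans (archi_boundP inve_ge0) _.
by rewrite ler_nat (leq_trans Nn).
Qed.

Lemma closed_subspaceN (A : set V) x : closed_subspace H A -> A x -> A (- x).
Proof. by case=> _ _ AZ _ Ax; rewrite -scaleN1r; apply: AZ. Qed.

Lemma closed_subspaceB (A : set V) x y :
  closed_subspace H A -> A x -> A y -> A (x - y).
Proof.
by move=> cA Ax Ay; case: (cA) => _ AD _ _; apply: AD Ax (closed_subspaceN cA Ay).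
Qed.

Lemma parallelogram x y :
  sqnorm (x + y) + sqnorm (x - y) = 2 * sqnorm x + 2 * sqnorm y.
Proof. by rewrite sqnormD sqnormB; lra. Qed.

Lemma near_minimizers_close (A : set V) x (d ea eb : R) a b :
  closed_subspace H A -> (forall c, A c -> d <= sqnorm (x - c)) -> A a -> A b ->
  sqnorm (x - a) <= d + ea -> sqnorm (x - b) <= d + eb ->
  sqnorm (a - b) <= 2 * ea + 2 * eb.
Proof.
move=> [_ AD AZ _] d_le Aa Ab near_a near_b.
pose m := (2^-1 : R)%:C *: (a + b).
have mid : (x - a) + (x - b) = 2%:R%:C *: (x - m).
  rewrite scalerBr scalerA -rmorphM /= mulfV ?pnatr_eq0 // scale1r.
  by rewrite rmorph_nat scaler_nat mulr2n addrACA opprD.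
have := parallelogram (x - a) (x - b).
have -> : x - a - (x - b) = - (a - b) by rewrite !opprB addrC addrA subrK.
rewrite mid sqnormZ sqnormN expr2.
have := d_le m (AZ _ _ (AD _ _ Aa Ab)).
lra.
Qed.

Lemma hconv_sqnorm_sub_le x u l (d : R) : hconv H u l -> 0 <= d ->
  (forall e : R, 0 < e -> exists N, forall n, (N <= n)%N -> sqnorm (x - u n) < d + e) ->
  sqnorm (x - l) <= d.
Proof.
move=> /hconv_sqnorm cvg_ul d_ge0 near_d; apply/ler_addgt0Pr => eps eps_gt0.
pose e := eps / 3%:R; have e_gt0 : 0 < e by rewrite divr_gt0.
pose s := e / (d + 1); have s_gt0 : 0 < s by rewrite divr_gt0 // ltr_wpDl.
pose K := 1 + s^-1; have K_gt0 : 0 < K by rewrite ltr_wpDr // invr_ge0 ltW.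
have [N1 HN1] := cvg_ul (e / K) (divr_gt0 e_gt0 K_gt0).
have [N2 HN2] := near_d 1 ltr01.
have [N3 HN3] := near_d e e_gt0.
pose n := maxn N1 (maxn N2 N3).
have [/HN1 small_l /HN2 near1 /HN3 neare] : [/\ N1 <= n, N2 <= n & N3 <= n]%N.
  by split; rewrite !leq_max leqnn ?orbT.
have sq1_le : s * sqnorm (x - u n) <= e.
  by rewrite -ler_pdivlMl // invf_div divfK ?gt_eqF // ltW.
have sq2_le : K * sqnorm (u n - l) <= e.
  by rewrite mulrC -ler_pdivlMr // ltW.
have := sqnormD_le (x - u n) (u n - l) s_gt0.
rewrite addrA subrK mulrDl mul1r -/K.
have eps3 : eps = e * 3%:R by rewrite divfK ?pnatr_eq0.
lra.
Qed.

Lemma nearest_point_exists (A : set V) x : closed_subspace H A ->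
  exists2 y, A y & forall a, A a -> sqnorm (x - y) <= sqnorm (x - a).
Proof.
move=> cA; have [A0 _ _ Alim] := cA.
pose E := [set sqnorm (x - a) | a in A].
have E_ne0 : E !=set0 by exists (sqnorm (x - 0)), 0.
have E_ge0 : lbound E 0 by move=> _ [a _ <-]; apply: sqnorm_ge0.
have E_inf : has_inf E by split; last exists 0.
pose d := inf E.
have d_le a : A a -> d <= sqnorm (x - a).
  by move=> Aa; apply: (ge_inf (proj2 E_inf)); exists a.
have d_ge0 : 0 <= d by apply: lb_le_inf.
have /choice[a Ha] n : exists a, A a /\ sqnorm (x - a) < d + n.+1%:R^-1.
  have invS_gt0 : 0 < n.+1%:R^-1 :> R by rewrite invr_gt0 ltr0n.
  by have [_ [a Aa <-] ?] := inf_adherent invS_gt0 E_inf; exists a.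
have [y cvg_ay] : exists y, hconv H a y.
  apply: sqnorm_cauchy_cvg => del del_gt0.
  have [N HN] := invS_lt_eventually (divr_gt0 del_gt0 (ltr0n R 4)).
  exists N => m n Nm Nn; have [Am near_m] := Ha m; have [An near_n] := Ha n.
  have := near_minimizers_close cA d_le Am An (ltW near_m) (ltW near_n).
  have := HN m Nm; have := HN n Nn.
  set em := m.+1%:R^-1; set en := n.+1%:R^-1.
  lra.
exists y; first by apply: (Alim a) => // n; case: (Ha n).
move=> b Ab; apply: le_trans (d_le b Ab).
apply: hconv_sqnorm_sub_le cvg_ay d_ge0 _ => e e_gt0.
have [N HN] := invS_lt_eventually e_gt0.
exists N => n /HN; have [_ near_n] := Ha n.
by set en := n.+1%:R^-1 in near_n *; lra.
Qed.

Lemma nearest_is_proj (A : set V) x y : closed_subspace H A -> A y ->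
  (forall a, A a -> sqnorm (x - y) <= sqnorm (x - a)) -> is_proj H A x y.
Proof.
move=> cA Ay nearest; split=> // z Az; have [_ AD AZ _] := cA.
have Re_le0 w : A w -> complex.Re (ip (x - y) w) <= 0.
  move=> Aw; rewrite leNgt; apply/negP; set c := complex.Re _ => c_gt0.
  have sqw1_gt0 : 0 < sqnorm w + 1 by have := sqnorm_ge0 w; lra.
  pose t := c / (sqnorm w + 1); have t_gt0 : 0 < t by rewrite divr_gt0.
  have := nearest _ (AD _ _ Ay (AZ t%:C _ Aw)).
  rewrite opprD addrA (sqnormB (x - y)) sqnormZ innerZr.
  have -> : complex.Re (t%:C^* * ip (x - y) w) = t * c.
    by rewrite /c; case: (ip _ _) => ? ? /=; rewrite oppr0 mul0r subr0.
  have : t * (sqnorm w + 1) = c by rewrite divfK ?gt_eqF.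
  rewrite expr2 => t_def; nra.
(* Testing against +-z and +-iz bounds the real and imaginary parts of <x - y, z>. *)
have := Re_le0 _ Az; have := Re_le0 _ (closed_subspaceN cA Az).
have Aiz := AZ 'i _ Az.
have := Re_le0 _ Aiz; have := Re_le0 _ (closed_subspaceN cA Aiz).
rewrite !innerNr !innerZr !raddfN /=.
case: (ip (x - y) z) => a b /= *.
by apply/eqP; rewrite eq_complex /=; apply/andP; split; apply/eqP; lra.
Qed.

Section Projection.
Variables (A : set V) (cA : closed_subspace H A).

Lemma proj_spec x : is_proj H A x (proj H A x).
Proof.
apply: epsilon_spec; have [y Ay nearest] := nearest_point_exists x cA.
by exists y; apply: nearest_is_proj.
Qed.

Lemma projE x y : is_proj H A x y -> proj H A x = y.
Proof.
have [Apx orth_px] := proj_spec x; case=> Ay orth_y.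
have /subr0_eq // : proj H A x - y = 0.
have diff : proj H A x - y = (x - y) - (x - proj H A x).
  by rewrite opprB [RHS]addrC addrA subrK.
have Adiff : A (proj H A x - y) by apply: closed_subspaceB.
by apply: (@inner_eq0 _ _ H); rewrite {1}diff innerBl orth_px // orth_y // subrr.
Qed.

Lemma proj_id a : A a -> proj H A a = a.
Proof. by move=> Aa; apply: projE; split=> // z _; rewrite subrr inner0l. Qed.

Lemma proj_ortho v : Defs.ortho H A v -> proj H A v = 0.
Proof. by move=> Av; apply: projE; split=> [|z Az]; [case: cA | rewrite subr0 Av]. Qed.

Lemma projD u v : proj H A (u + v) = proj H A u + proj H A v.
Proof.
have [Au orth_u] := proj_spec u; have [Av orth_v] := proj_spec v.
apply: projE; split=> [|z Az]; first by case: cA => _ AD _ _; apply: AD.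
by rewrite opprD addrACA innerD orth_u // orth_v // addr0.
Qed.

Lemma projZ a u : proj H A (a *: u) = a *: proj H A u.
Proof.
have [Au orth_u] := proj_spec u.
apply: projE; split=> [|z Az]; first by case: cA => _ _ AZ _; apply: AZ.
by rewrite -scalerBr innerZ orth_u // mulr0.
Qed.

Lemma sqnorm_proj_le v : sqnorm (proj H A v) <= sqnorm v.
Proof.
have [Apv orth_pv] := proj_spec v.
rewrite -[v in X in _ <= X](subrK (proj H A v)) addrC sqnormD innerC orth_pv //.
by rewrite conjc0 /= mulr0 addr0 lerDl sqnorm_ge0.
Qed.

Lemma proj_hconv u l : hconv H u l -> hconv H (proj H A \o u) (proj H A l).
Proof.
move=> /hconv_sqnorm cvg_ul; apply/hconv_sqnorm => d /cvg_ul[N HN].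
exists N => n /HN; apply: le_lt_trans.
by rewrite /= -[- _]scaleN1r -projZ -projD scaleN1r sqnorm_proj_le.
Qed.

End Projection.

Lemma closed_subspace_preimage (f : V -> V) (B : set V) :
  (forall x y, f (x + y) = f x + f y) -> (forall a x, f (a *: x) = a *: f x) ->
  (forall u l, hconv H u l -> hconv H (f \o u) (f l)) ->
  closed_subspace H B -> closed_subspace H (f @^-1` B).
Proof.
move=> fD fZ f_cont [B0 BD BZ Blim]; split=> /=.
- by rewrite -(scale0r 0) fZ scale0r.
- by move=> x y Bfx Bfy; rewrite fD; apply: BD.
- by move=> a x Bfx; rewrite fZ; apply: BZ.
- by move=> u l Bfu /f_cont; apply: Blim.
Qed.

Lemma closed_subspace_proj_preimage (A B : set V) :
  closed_subspace H A -> closed_subspace H B ->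
  closed_subspace H (proj H A @^-1` B).
Proof.
move=> cA; apply: closed_subspace_preimage; [exact: projD | exact: projZ |].
exact: proj_hconv.
Qed.

Lemma andthen_sub_proj_preimage (S A B : set V) :
  closed_subspace H A -> closed_subspace H B ->
  andthen H S A `<=` B <-> S `<=` proj H A @^-1` B.
Proof.
move=> cA cB; split=> [SAB s Ss | SpB s [Ss_join As]].
- apply: SAB; split; last by case: (proj_spec cA s).
  move=> C cC SC AC.
  have -> : proj H A s = s - (s - proj H A s) by rewrite opprB addrC subrK.
  apply: closed_subspaceB => //; first exact: SC.
  by apply: AC => z Az; case: (proj_spec cA s) => _; apply.
- rewrite -(proj_id cA As).
  apply: (Ss_join (proj H A @^-1` B)).
  + exact: closed_subspace_proj_preimage.
  + exact: SpB.
  + by move=> v /(proj_ortho cA) /= ->; case: cB.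
Qed.

End Hilbert.

Theorem lemmaA2 (R : realType) (V : lmodType R[i]) (H : hilbert V)
    (As : seq (set V)) (B : set V) :
  (forall A, A \in As -> closed_subspace H A) ->
  closed_subspace H B ->
  (andthen_seq H As `<=` B <-> (forall x : V, B (proj_seq H As x))).
Proof.
elim/last_ind: As B => [|As A IH] B cAs cB.
  by split=> [SB x | Bx x _]; [apply: SB | apply: Bx].
have cA : closed_subspace H A by apply: cAs; rewrite mem_rcons mem_head.
have cAs' A' : A' \in As -> closed_subspace H A'.
  by move=> AsA'; apply: cAs; rewrite mem_rcons in_cons AsA' orbT.
rewrite /andthen_seq foldl_rcons -/(andthen_seq H As).
rewrite /proj_seq; under eq_forall do rewrite foldl_rcons -/(proj_seq H As _).
rewrite andthen_sub_proj_preimage // IH //.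
exact: closed_subspace_proj_preimage.
Qed.
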